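(* Let $\mathcal{H}$ be a separable complex Hilbert space with $\dim\mathcal{H}=\infty$, and let $A\in\mathcal{B}(\mathcal{H})$. Then there exist two orthonormal bases $(u_n)_{n\in\mathbb{N}}$ and $(v_n)_{n\in\mathbb{N}}$ of $\mathcal{H}$ such that, for every $N\in\mathbb{N}$, the $N\times N$ matrix $A_N$ with entries $(A_N)_{ij}=\langle v_i,Au_j\rangle$, $i,j\in\{1,\dots,N\}$, is singular.
   Context: $\mathcal{B}(\mathcal{H})$ denotes the space of bounded, everywhere defined linear operators on $\mathcal{H}$. The inner product $\langle\cdot,\cdot\rangle$ is antilinear in the first entry and linear in the second. *)

From Stdlib Require Import Reals.
Open Scope R_scope.

Record Cplx : Type := mkC { re : R ; im : R }.

Definition C0 : Cplx := mkC 0 0.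
Definition C1 : Cplx := mkC 1 0.
Definition Cadd (a b : Cplx) : Cplx := mkC (re a + re b) (im a + im b).
Definition Copp (a : Cplx) : Cplx := mkC (- re a) (- im a).
Definition Cmul (a b : Cplx) : Cplx :=
  mkC (re a * re b - im a * im b) (re a * im b + im a * re b).
Definition Cconj (a : Cplx) : Cplx := mkC (re a) (- im a).

Fixpoint Csum (n : nat) (f : nat -> Cplx) : Cplx :=
  match n with
  | O => C0
  | S m => Cadd (Csum m f) (f m)
  end.

(* ---------- Complex Hilbert spaces ----------
   Inner product antilinear in the first entry, linear in the second. *)
Record HilbertSpace : Type := {
  carrier :> Type ;
  vadd : carrier -> carrier -> carrier ;
  vzero : carrier ;
  vopp : carrier -> carrier ;
  vscal : Cplx -> carrier -> carrier ;
  inner : carrier -> carrier -> Cplx ;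
  vadd_assoc : forall x y z, vadd x (vadd y z) = vadd (vadd x y) z ;
  vadd_comm : forall x y, vadd x y = vadd y x ;
  vadd_zero : forall x, vadd x vzero = x ;
  vadd_opp : forall x, vadd x (vopp x) = vzero ;
  vscal_one : forall x, vscal C1 x = x ;
  vscal_assoc : forall a b x, vscal a (vscal b x) = vscal (Cmul a b) x ;
  vscal_distr_v : forall a x y, vscal a (vadd x y) = vadd (vscal a x) (vscal a y) ;
  vscal_distr_c : forall a b x, vscal (Cadd a b) x = vadd (vscal a x) (vscal b x) ;
  inner_conj_sym : forall x y, inner y x = Cconj (inner x y) ;
  inner_add_r : forall x y z, inner x (vadd y z) = Cadd (inner x y) (inner x z) ;
  inner_scal_r : forall a x y, inner x (vscal a y) = Cmul a (inner x y) ;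
  inner_pos : forall x, 0 <= re (inner x x) ;
  inner_definite : forall x, inner x x = C0 -> x = vzero ;
  complete : forall f : nat -> carrier,
    (forall eps, 0 < eps -> exists N, forall m n, (N <= m)%nat -> (N <= n)%nat ->
        sqrt (re (inner (vadd (f m) (vopp (f n))) (vadd (f m) (vopp (f n))))) < eps) ->
    exists l, forall eps, 0 < eps -> exists N, forall n, (N <= n)%nat ->
        sqrt (re (inner (vadd (f n) (vopp l)) (vadd (f n) (vopp l)))) < eps
}.

Arguments vadd {h}. Arguments vzero {h}. Arguments vopp {h}.
Arguments vscal {h}. Arguments inner {h}.

Definition hnorm {H : HilbertSpace} (x : H) : R := sqrt (re (inner x x)).
Definition vsub {H : HilbertSpace} (x y : H) : H := vadd x (vopp y).

Fixpoint vlincomb {H : HilbertSpace} (n : nat) (c : nat -> Cplx) (f : nat -> H) : H :=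
  match n with
  | O => vzero
  | S m => vadd (vlincomb m c f) (vscal (c m) (f m))
  end.

Definition separable (H : HilbertSpace) : Prop :=
  exists d : nat -> H, forall (x : H) (eps : R), 0 < eps ->
    exists n, hnorm (vsub x (d n)) < eps.

Definition infinite_dimensional (H : HilbertSpace) : Prop :=
  forall (n : nat) (f : nat -> H), exists x : H,
    forall c : nat -> Cplx, x <> vlincomb n c f.

Definition bounded_operator {H : HilbertSpace} (A : H -> H) : Prop :=
  (forall x y, A (vadd x y) = vadd (A x) (A y)) /\
  (forall a x, A (vscal a x) = vscal a (A x)) /\
  (exists M : R, forall x, hnorm (A x) <= M * hnorm x).

Definition orthonormal_basis {H : HilbertSpace} (u : nat -> H) : Prop :=
  (forall i j, inner (u i) (u j) = if Nat.eqb i j then C1 else C0) /\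
  (forall x : H, (forall n, inner (u n) x = C0) -> x = vzero).

(* square matrices of size N: entries M i j for i, j < N (0-based) *)
Definition matmul (N : nat) (M P : nat -> nat -> Cplx) : nat -> nat -> Cplx :=
  fun i j => Csum N (fun k => Cmul (M i k) (P k j)).

Definition invertible_mx (N : nat) (M : nat -> nat -> Cplx) : Prop :=
  exists P : nat -> nat -> Cplx, forall i j, (i < N)%nat -> (j < N)%nat ->
    matmul N M P i j = (if Nat.eqb i j then C1 else C0) /\
    matmul N P M i j = (if Nat.eqb i j then C1 else C0).

Definition singular_mx (N : nat) (M : nat -> nat -> Cplx) : Prop :=
  ~ invertible_mx N M.

(* the truncated matrix (A_N)_{ij} = <v_i, A u_j> (0-based indices) *)
Definition compression {H : HilbertSpace} (A : H -> H) (u v : nat -> H) :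
  nat -> nat -> Cplx := fun i j => inner (v i) (A (u j)).

(* Construct v by interleaving two kinds of steps.  At step 2k+1, Gram-Schmidt
   applied to the k-th vector of a dense sequence makes that vector a
   combination of v_0, ..., v_{2k+1}; this forces the family v to be complete.
   At step 2k, infinite dimensionality lets us take v_{2k} orthogonal to
   v_0, ..., v_{2k-1} and to A u_0, ..., A u_{2k+1}.  Then for every N the row
   2 floor((N-1)/2) of A_N vanishes. *)
From Stdlib Require Import Reals Lra Lia Classical ClassicalEpsilon PeanoNat.
From Pilot Require Import Defs. (* after Reals, whose C1 would shadow Defs.C1 *)
Open Scope R_scope.

Lemma Cplx_eq (a b : Cplx) : re a = re b -> im a = im b -> a = b.
Proof. destruct a, b; simpl; intros; subst; reflexivity. Qed.

Lemma Csum_ext n f g : (forall k, (k < n)%nat -> f k = g k) -> Csum n f = Csum n g.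
Proof.
  induction n; intros E; simpl; auto.
  rewrite IHn, E; auto; intros; apply E; lia.
Qed.

Lemma Csum_eq0 n f : (forall k, (k < n)%nat -> f k = C0) -> Csum n f = C0.
Proof.
  induction n; intros E; simpl; auto.
  rewrite IHn, E; [apply Cplx_eq; simpl; lra | lia | intros; apply E; lia].
Qed.

Lemma Csum_delta n i (a : nat -> Cplx) :
  Csum n (fun k => Cmul (a k) (if Nat.eqb i k then C1 else C0)) =
  if Nat.ltb i n then a i else C0.
Proof.
  induction n; simpl; auto.
  rewrite IHn. destruct (Nat.eqb_spec i n) as [->|Hin].
  - rewrite (proj2 (Nat.ltb_ge n n)), (proj2 (Nat.ltb_lt n (S n))) by lia.
    apply Cplx_eq; simpl; ring.
  - destruct (Nat.ltb_spec i n), (Nat.ltb_spec i (S n)); try lia;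
      apply Cplx_eq; simpl; ring.
Qed.

Section InnerProduct.

Variable H : HilbertSpace.
Implicit Types x y z t : H.

Lemma vadd_zero_l x : vadd vzero x = x.
Proof. rewrite vadd_comm; apply vadd_zero. Qed.

Lemma vscal_C0 x : vscal C0 x = vzero.
Proof.
  set (y := vscal C0 x).
  assert (Eyy : y = vadd y y).
  { unfold y. rewrite <- vscal_distr_c. f_equal. apply Cplx_eq; simpl; lra. }
  transitivity (vadd (vadd y y) (vopp y)).
  - rewrite <- vadd_assoc, vadd_opp, vadd_zero. reflexivity.
  - rewrite <- Eyy. apply vadd_opp.
Qed.

Lemma vsub_decomp t p : t = vadd p (vsub t p).
Proof.
  unfold vsub. rewrite (vadd_comm _ t), vadd_assoc, vadd_opp, vadd_zero_l.
  reflexivity.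
Qed.

Lemma inner0r x : inner x vzero = C0.
Proof.
  assert (E : inner x (@vzero H) = Cadd (inner x vzero) (inner x vzero)).
  { rewrite <- inner_add_r, vadd_zero. reflexivity. }
  apply Cplx_eq; [apply (f_equal re) in E | apply (f_equal im) in E];
    simpl in *; lra.
Qed.

Lemma innerNr x y : inner x (vopp y) = Copp (inner x y).
Proof.
  assert (E : Cadd (inner x y) (inner x (vopp y)) = C0).
  { rewrite <- inner_add_r, vadd_opp. apply inner0r. }
  apply Cplx_eq; [apply (f_equal re) in E | apply (f_equal im) in E];
    simpl in *; lra.
Qed.

Lemma innerDl x y z : inner (vadd x y) z = Cadd (inner x z) (inner y z).
Proof.
  rewrite (inner_conj_sym _ z), inner_add_r, (inner_conj_sym _ z x),
    (inner_conj_sym _ z y).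
  apply Cplx_eq; simpl; lra.
Qed.

Lemma innerNl x z : inner (vopp x) z = Copp (inner x z).
Proof.
  rewrite (inner_conj_sym _ z), innerNr, (inner_conj_sym _ z x).
  apply Cplx_eq; simpl; lra.
Qed.

Lemma innerZl a x z : inner (vscal a x) z = Cmul (Cconj a) (inner x z).
Proof.
  rewrite (inner_conj_sym _ z), inner_scal_r, (inner_conj_sym _ z x).
  apply Cplx_eq; simpl; ring.
Qed.

Lemma im_inner_self x : im (inner x x) = 0.
Proof.
  pose proof (inner_conj_sym _ x x) as E. apply (f_equal im) in E. simpl in E. lra.
Qed.

Lemma inner_self_gt0 x : x <> vzero -> 0 < re (inner x x).
Proof.
  intros Hx. destruct (inner_pos _ x) as [Hgt|Heq]; [exact Hgt|].
  exfalso; apply Hx, inner_definite.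
  apply Cplx_eq; simpl; [lra | apply im_inner_self].
Qed.

Lemma orthogonal_sym x y : inner x y = C0 -> inner y x = C0.
Proof. intro E. rewrite inner_conj_sym, E. apply Cplx_eq; simpl; lra. Qed.

Lemma inner_lincomb_r x n c f :
  inner x (vlincomb n c f) = Csum n (fun k => Cmul (c k) (inner x (f k))).
Proof.
  induction n; simpl; [apply inner0r|].
  rewrite inner_add_r, inner_scal_r, IHn. reflexivity.
Qed.

Lemma lincomb_orthogonal y m c e :
  (forall k, (k < m)%nat -> inner (e k) y = C0) -> inner (vlincomb m c e) y = C0.
Proof.
  intros E. apply orthogonal_sym. rewrite inner_lincomb_r. apply Csum_eq0.
  intros k Hk. rewrite (orthogonal_sym _ _ (E k Hk)). apply Cplx_eq; simpl; ring.
Qed.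

Lemma vlincomb_ext n c c' (f f' : nat -> H) :
  (forall k, (k < n)%nat -> c k = c' k /\ f k = f' k) ->
  vlincomb n c f = vlincomb n c' f'.
Proof.
  induction n; intros E; simpl; auto.
  destruct (E n) as [-> ->]; [lia|]. rewrite IHn; [reflexivity|].
  intros; apply E; lia.
Qed.

(* ||x - d_n||^2 = ||x||^2 + ||d_n||^2 >= ||x||^2, so no d_n is within ||x|| of x. *)
Lemma orthogonal_dense_eq0 (d : nat -> H) x :
  (forall y eps, 0 < eps -> exists n, hnorm (vsub y (d n)) < eps) ->
  (forall n, inner x (d n) = C0) -> x = vzero.
Proof.
  intros Hd Hxd. apply NNPP. intros Hx.
  pose proof (inner_self_gt0 x Hx) as Hpos.
  destruct (Hd x (sqrt (re (inner x x)))) as [n Hn];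
    [apply sqrt_lt_R0; lra|].
  unfold hnorm, vsub in Hn.
  rewrite innerDl, !inner_add_r, innerNl, !innerNr, (Hxd n),
    (orthogonal_sym _ _ (Hxd n)), ?innerNl, ?innerNr in Hn.
  simpl in Hn. pose proof (inner_pos _ (d n)).
  apply sqrt_lt_0_alt in Hn. lra.
Qed.

End InnerProduct.

Arguments vsub_decomp {H}. Arguments orthogonal_sym {H}.
Arguments inner_self_gt0 {H}.

Section GramSchmidt.

Variable H : HilbertSpace.

Definition orthonormal_upto (m : nat) (e : nat -> H) : Prop :=
  forall i j, (i < m)%nat -> (j < m)%nat ->
    inner (e i) (e j) = if Nat.eqb i j then C1 else C0.

Definition oproj (m : nat) (e : nat -> H) (t : H) : H :=
  vlincomb m (fun j => inner (e j) t) e.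

Lemma oproj_residual_orthogonal m e t i :
  orthonormal_upto m e -> (i < m)%nat -> inner (e i) (vsub t (oproj m e t)) = C0.
Proof.
  intros Hon Hi. unfold vsub, oproj.
  rewrite inner_add_r, innerNr, inner_lincomb_r.
  rewrite (Csum_ext _ _
    (fun k => Cmul (inner (e k) t) (if Nat.eqb i k then C1 else C0)))
    by (intros; rewrite Hon; auto).
  rewrite Csum_delta, (proj2 (Nat.ltb_lt _ _)) by lia.
  apply Cplx_eq; simpl; ring.
Qed.

Lemma normalize_vector (r : H) : r <> vzero ->
  exists s a, inner s s = C1 /\ r = vscal a s /\
    (forall y, inner y r = C0 -> inner y s = C0).
Proof.
  intros Hr. pose proof (inner_self_gt0 r Hr) as Hq.
  set (q := re (inner r r)) in Hq.
  assert (Hrr : inner r r = mkC q 0)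
    by (apply Cplx_eq; simpl; [reflexivity | apply im_inner_self]).
  assert (Hs : sqrt q * sqrt q = q) by (apply sqrt_sqrt; lra).
  assert (Hsp : 0 < sqrt q) by (apply sqrt_lt_R0; lra).
  set (s := sqrt q) in Hs, Hsp |- *.
  exists (vscal (mkC (/ s) 0) r), (mkC s 0). split; [|split].
  - rewrite innerZl, inner_scal_r, Hrr. apply Cplx_eq; simpl; [|ring].
    rewrite <- Hs. field. lra.
  - rewrite vscal_assoc. replace (Cmul (mkC s 0) (mkC (/ s) 0)) with C1.
    + symmetry; apply vscal_one.
    + apply Cplx_eq; simpl; [field; lra | ring].
  - intros y Hy. rewrite inner_scal_r, Hy. apply Cplx_eq; simpl; ring.
Qed.

Lemma gram_schmidt n (w : nat -> H) :
  exists m (e : nat -> H), orthonormal_upto m e /\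
    forall j, (j < n)%nat -> exists c, w j = vlincomb m c e.
Proof.
  induction n as [|n (m & e & Hon & Hrep)].
  { exists O, (fun _ => vzero). split; [intros i j Hi | intros j Hj]; lia. }
  set (r := vsub (w n) (oproj m e (w n))).
  destruct (classic (r = vzero)) as [Hr0|Hr0].
  - exists m, e. split; auto. intros j Hj.
    destruct (Nat.eq_dec j n) as [->|Hjn]; [|apply Hrep; lia].
    exists (fun j => inner (e j) (w n)).
    rewrite (vsub_decomp (w n) (oproj m e (w n))) at 1. fold r.
    rewrite Hr0, vadd_zero. reflexivity.
  - destruct (normalize_vector r Hr0) as (s & a & Hs1 & Hrs & Hso).
    assert (Hes : forall k, (k < m)%nat -> inner (e k) s = C0)
      by (intros; apply Hso, oproj_residual_orthogonal; auto).
    exists (S m), (fun j => if Nat.eqb j m then s else e j). split.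
    + intros i j Hi Hj.
      destruct (Nat.eqb_spec i m) as [->|Him], (Nat.eqb_spec j m) as [->|Hjm].
      * rewrite Nat.eqb_refl. exact Hs1.
      * rewrite (proj2 (Nat.eqb_neq m j)) by lia. apply orthogonal_sym, Hes. lia.
      * rewrite (proj2 (Nat.eqb_neq i m)) by lia. apply Hes. lia.
      * apply Hon; lia.
    + intros j Hj. destruct (Nat.eq_dec j n) as [->|Hjn].
      * exists (fun k => if Nat.eqb k m then a else inner (e k) (w n)).
        rewrite (vsub_decomp (w n) (oproj m e (w n))) at 1. fold r. rewrite Hrs.
        simpl. rewrite Nat.eqb_refl. f_equal. apply vlincomb_ext.
        intros k Hk. rewrite (proj2 (Nat.eqb_neq k m)) by lia. auto.
      * destruct (Hrep j ltac:(lia)) as [c ->].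
        exists (fun k => if Nat.eqb k m then C0 else c k).
        simpl. rewrite Nat.eqb_refl, vscal_C0, vadd_zero.
        apply vlincomb_ext. intros k Hk.
        rewrite (proj2 (Nat.eqb_neq k m)) by lia. auto.
Qed.

Hypothesis Hinf : infinite_dimensional H.

Lemma exists_unit_orthogonal n (w : nat -> H) :
  exists x, inner x x = C1 /\ forall j, (j < n)%nat -> inner (w j) x = C0.
Proof.
  destruct (gram_schmidt n w) as (m & e & Hon & Hrep).
  destruct (Hinf m e) as [x Hx].
  set (r := vsub x (oproj m e x)).
  assert (Hr0 : r <> vzero).
  { intro E. apply (Hx (fun j => inner (e j) x)).
    rewrite (vsub_decomp x (oproj m e x)) at 1. fold r.
    rewrite E, vadd_zero. reflexivity. }
  destruct (normalize_vector r Hr0) as (s & a & Hs1 & Hrs & Hso).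
  exists s. split; auto. intros j Hj. destruct (Hrep j Hj) as [c ->].
  apply lincomb_orthogonal. intros k Hk.
  apply Hso, oproj_residual_orthogonal; auto.
Qed.

Lemma exists_unit_orthogonal_spanning k (f : nat -> H) t :
  orthonormal_upto k f ->
  exists x, inner x x = C1 /\ (forall j, (j < k)%nat -> inner (f j) x = C0) /\
    exists c a, t = vadd (vlincomb k c f) (vscal a x).
Proof.
  intros Hon. set (r := vsub t (oproj k f t)).
  assert (Ht : t = vadd (vlincomb k (fun j => inner (f j) t) f) r)
    by apply vsub_decomp.
  destruct (classic (r = vzero)) as [E|E].
  - destruct (exists_unit_orthogonal k f) as (x & Hx1 & Hx).
    exists x. repeat split; auto.
    exists (fun j => inner (f j) t), C0. rewrite vscal_C0, <- E. exact Ht.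
  - destruct (normalize_vector r E) as (s & a & Hs1 & Hrs & Hso).
    exists s. repeat split; auto.
    + intros; apply Hso, oproj_residual_orthogonal; auto.
    + exists (fun j => inner (f j) t), a. rewrite <- Hrs. exact Ht.
Qed.

End GramSchmidt.

Arguments orthonormal_upto {H}.

Section DependentChoice.

Variables (T : Type) (x0 : T) (P : nat -> (nat -> T) -> T -> Prop).

Hypothesis P_prefix : forall k f g x,
  (forall j, (j < k)%nat -> f j = g j) -> P k f x -> P k g x.
Hypothesis P_extend : forall k f,
  (forall j, (j < k)%nat -> P j f (f j)) -> exists x, P k f x.

Fixpoint prefix_seq (k : nat) : nat -> T :=
  match k with
  | O => fun _ => x0
  | S k' => fun j =>
      if Nat.eqb j k' then epsilon (inhabits x0) (P k' (prefix_seq k'))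
      else prefix_seq k' j
  end.

Let seq (k : nat) : T := prefix_seq (S k) k.

Lemma prefix_seqE k j : (j < k)%nat -> prefix_seq k j = seq j.
Proof.
  induction k; intros Hj; [lia|]. simpl.
  destruct (Nat.eqb_spec j k) as [->|Hjk].
  - unfold seq. simpl. rewrite Nat.eqb_refl. reflexivity.
  - apply IHk. lia.
Qed.

Lemma dependent_choice_seq : exists v : nat -> T, forall k, P k v (v k).
Proof.
  exists seq.
  assert (Hall : forall n k, (k < n)%nat -> P k seq (seq k)).
  { induction n as [|n IHn]; intros k Hk; [lia|].
    apply (P_prefix _ (prefix_seq k)); [apply prefix_seqE|].
    unfold seq; simpl; rewrite Nat.eqb_refl.
    apply epsilon_spec, P_extend. intros j Hj.
    rewrite prefix_seqE by lia.
    apply (P_prefix _ seq); [intros; symmetry; apply prefix_seqE; lia|].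
    apply IHn; lia. }
  intros k. apply (Hall (S k)); lia.
Qed.

End DependentChoice.

Section ConstrainedBasis.

Variables (H : HilbertSpace) (d : nat -> H).
Hypothesis Hd : forall x eps, 0 < eps -> exists n, hnorm (vsub x (d n)) < eps.
Hypothesis Hinf : infinite_dimensional H.
Variables (cnt : nat -> nat) (g : nat -> nat -> H).

(* Even indices 2m carry the constraints g m _, odd indices 2m+1 absorb d m. *)
Definition basis_step (k : nat) (f : nat -> H) (x : H) : Prop :=
  inner x x = C1 /\ (forall j, (j < k)%nat -> inner (f j) x = C0) /\
  if Nat.even k
  then forall j, (j < cnt (Nat.div2 k))%nat -> inner (g (Nat.div2 k) j) x = C0
  else exists c a, d (Nat.div2 k) = vadd (vlincomb k c f) (vscal a x).

Lemma basis_step_prefix k f f' x :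
  (forall j, (j < k)%nat -> f j = f' j) -> basis_step k f x -> basis_step k f' x.
Proof.
  intros Eff (Hx1 & Hxf & Hxc). split; [exact Hx1|split].
  - intros j Hj. rewrite <- Eff by exact Hj. auto.
  - destruct (Nat.even k); [exact Hxc|].
    destruct Hxc as (c & a & Hda). exists c, a.
    rewrite Hda, (vlincomb_ext _ k c c f f'); auto.
Qed.

Lemma basis_step_orthonormal k f :
  (forall j, (j < k)%nat -> basis_step j f (f j)) -> orthonormal_upto k f.
Proof.
  intros Hprev i j Hi Hj.
  destruct (Nat.lt_trichotomy i j) as [Hij|[<-|Hij]].
  - rewrite (proj2 (Nat.eqb_neq i j)) by lia. apply (proj1 (proj2 (Hprev j Hj))), Hij.
  - rewrite Nat.eqb_refl. apply (proj1 (Hprev i Hi)).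
  - rewrite (proj2 (Nat.eqb_neq i j)) by lia.
    apply orthogonal_sym, (proj1 (proj2 (Hprev i Hi))), Hij.
Qed.

Lemma basis_step_exists k f :
  (forall j, (j < k)%nat -> basis_step j f (f j)) -> exists x, basis_step k f x.
Proof.
  intros Hprev. pose proof (basis_step_orthonormal k f Hprev) as Hon.
  unfold basis_step. destruct (Nat.even k).
  - set (m := Nat.div2 k).
    destruct (exists_unit_orthogonal H Hinf (k + cnt m)
      (fun j => if Nat.ltb j k then f j else g m (j - k)%nat)) as (x & Hx1 & Hx).
    exists x. split; [exact Hx1|split].
    + intros j Hj. specialize (Hx j ltac:(lia)).
      rewrite (proj2 (Nat.ltb_lt _ _) Hj) in Hx. exact Hx.
    + intros j Hj. specialize (Hx (k + j)%nat ltac:(lia)).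
      rewrite (proj2 (Nat.ltb_ge _ _)), Nat.add_comm, Nat.add_sub in Hx by lia.
      exact Hx.
  - destruct (exists_unit_orthogonal_spanning H Hinf k f (d (Nat.div2 k)) Hon)
      as (x & Hx1 & Hxf & Hspan).
    exists x. auto.
Qed.

Lemma constrained_orthonormal_basis :
  exists v : nat -> H, orthonormal_basis v /\
    forall m j, (j < cnt m)%nat -> inner (g m j) (v (2 * m)%nat) = C0.
Proof.
  destruct (dependent_choice_seq H vzero basis_step basis_step_prefix
    basis_step_exists) as [v Hv].
  exists v. split; [split|].
  - intros i j. apply (basis_step_orthonormal (S (max i j))); auto; lia.
  - intros x Hx. apply (orthogonal_dense_eq0 H d x Hd). intros m.
    destruct (Hv (2 * m + 1)%nat) as (_ & _ & Hspan).
    rewrite Nat.even_odd, Nat.div2_odd' in Hspan.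
    destruct Hspan as (c & a & ->).
    rewrite inner_add_r, inner_scal_r, (orthogonal_sym _ _ (Hx _)),
      (orthogonal_sym _ _ (lincomb_orthogonal H x _ c v (fun k _ => Hx k))).
    apply Cplx_eq; simpl; ring.
  - intros m j Hj. destruct (Hv (2 * m)%nat) as (_ & _ & Hconstr).
    rewrite Nat.even_even, Nat.div2_double in Hconstr. auto.
Qed.

End ConstrainedBasis.

Lemma zero_row_singular N (M : nat -> nat -> Cplx) i :
  (i < N)%nat -> (forall j, (j < N)%nat -> M i j = C0) -> singular_mx N M.
Proof.
  intros Hi Hrow [P HP].
  destruct (HP i i Hi Hi) as [E _]. rewrite Nat.eqb_refl in E.
  unfold matmul in E. rewrite Csum_eq0 in E.
  - apply (f_equal re) in E. simpl in E. lra.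
  - intros k Hk. rewrite Hrow by exact Hk. apply Cplx_eq; simpl; ring.
Qed.

Theorem lemma2p1 (H : HilbertSpace) (Hsep : separable H)
  (Hinf : infinite_dimensional H) (A : H -> H) (HA : bounded_operator A) :
  exists u v : nat -> H, orthonormal_basis u /\ orthonormal_basis v /\
    forall N : nat, (1 <= N)%nat -> singular_mx N (compression A u v).
Proof.
  destruct Hsep as [d Hd].
  destruct (constrained_orthonormal_basis H d Hd Hinf (fun _ => O) (fun _ _ => vzero))
    as [u [Hu _]].
  destruct (constrained_orthonormal_basis H d Hd Hinf
    (fun m => (2 * m + 2)%nat) (fun _ j => A (u j))) as [v [Hv Hrow]].
  exists u, v. repeat split; try apply Hu; try apply Hv.
  intros N HN. set (m := Nat.div2 (N - 1)).
  assert (Hm : (2 * m < N <= 2 * m + 2)%nat).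
  { pose proof (Nat.div2_odd (N - 1)). unfold m.
    destruct (Nat.odd (N - 1)); simpl in *; lia. }
  apply (zero_row_singular N _ (2 * m)); [lia|].
  intros j Hj. apply orthogonal_sym, Hrow. lia.
Qed.
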